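(* For positive integers $n$ and $q \ge 2$ define $$A_{n,q} = \{(x_1,\dots,x_n) \in \mathbb{Z}^n \mid x_1 + \cdots + x_n \le 1.32\,n,\ 0 \le x_i \le q-1 \text{ for } 1 \le i \le n\}$$ and $$B_n = \{(x_1,\dots,x_n) \in \mathbb{Z}^n \mid |\{ i : x_i = 0\}| \ge 0.5657\, n\}.$$ Then there is a constant $c > 1$ such that $$\frac{|A_{n,q} \cap B_n|}{|A_{n,q}|} < c^{-n}$$ for all sufficiently large $n$. *)

From mathcomp Require Import all_boot.
From Stdlib Require Import Reals.

Set Implicit Arguments.
Unset Strict Implicit.
Unset Printing Implicit Defensive.

(* A vector (x_1,...,x_n) in Z^n with 0 <= x_i <= q-1 is represented as a
   finite function 'I_n -> 'I_q (bijective correspondence). *)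
Definition vec (n q : nat) := {ffun 'I_n -> 'I_q}.

Definition vsum n q (x : vec n q) : nat := \sum_(i < n) (x i : nat).

Definition nzeros n q (x : vec n q) : nat := #|[set i : 'I_n | (x i : nat) == 0]|.

Definition A_set (n q : nat) : {set vec n q} :=
  [set x : vec n q | 100 * vsum x <= 132 * n].

Definition AB_set (n q : nat) : {set vec n q} :=
  [set x in A_set n q | 5657 * n <= 10000 * nzeros x].

(* Weighting argument: for 0 < t <= 1 <= u every x in A_{n,q} ∩ B_n has
   u^(#zeros x) t^(sum x) >= (u^0.56 t^1.32)^n, hence
   |A_{n,q} ∩ B_n| <= (W / (u^0.56 t^1.32))^n with W = u - 1 + \sum_(k < q) t^k.
   On the other side |A_{n,q}| is supermultiplicative in n (concatenate vectors),
   so |A_{n,q}| >= |A_{m,q0}|^(n/m) for every q0 <= q.  Rational t, u and an exact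
   count of |A_{m,q0}| (dynamic programming on the coordinate sum) show that the
   first exponential rate is strictly below the second; for q >= 8 the weight sum
   is bounded by the full geometric series, uniformly in q. *)

From Stdlib Require Import Reals ZArith QArith Qreals.
From mathcomp Require Import all_boot all_order all_algebra zify Rstruct.

Set Implicit Arguments.
Unset Strict Implicit.
Unset Printing Implicit Defensive.

Import Order.TTheory GRing.Theory Num.Theory.
Close Scope Q_scope.

Definition vsum_le_set n q S : {set vec n q} := [set x | vsum x <= S].

Lemma A_setE n q : A_set n q = vsum_le_set n q (132 * n %/ 100).
Proof. by apply/setP => x; rewrite !inE leq_divRL // mulnC. Qed.

Lemma subset_vsum_le_set n q S S' :
  S <= S' -> vsum_le_set n q S \subset vsum_le_set n q S'.
Proof. by move=> leSS'; apply/subsetP => x; rewrite !inE => /leq_trans; apply. Qed.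

Lemma card_vsum_le_set_gt0 n q S : 0 < q -> 0 < #|vsum_le_set n q S|.
Proof.
move=> q_gt0; apply/card_gt0P; exists [ffun _ => Ordinal q_gt0].
by rewrite inE /vsum big1 // => i _; rewrite ffunE.
Qed.

Lemma leq_card_imset (T U : finType) (f : T -> U) (A : {set T}) (B : {set U}) :
  injective f -> {subset f @: A <= B} -> #|A| <= #|B|.
Proof.
by move=> f_inj fAB; rewrite -(card_imset A f_inj); apply/subset_leq_card/subsetP.
Qed.

Lemma leq_card_vsum_le_set_widen n q0 q S :
  q0 <= q -> #|vsum_le_set n q0 S| <= #|vsum_le_set n q S|.
Proof.
move=> le_q0q; pose widen (x : vec n q0) : vec n q := [ffun i => widen_ord le_q0q (x i)].
apply: (@leq_card_imset _ _ widen).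
  move=> x y /ffunP eq_xy; apply/ffunP => i.
  by apply: val_inj; have := eq_xy i; rewrite !ffunE => /(congr1 val).
move=> _ /imsetP [x + ->]; rewrite !inE.
suff -> : vsum (widen x) = vsum x by [].
by apply: eq_bigr => i _; rewrite ffunE.
Qed.

Definition vcat n1 n2 q (y : vec n1 q) (z : vec n2 q) : vec (n1 + n2) q :=
  [ffun i => match fintype.split i with inl a => y a | inr b => z b end].

Lemma vcat_lshift n1 n2 q (y : vec n1 q) (z : vec n2 q) i : vcat y z (lshift n2 i) = y i.
Proof. by rewrite ffunE (unsplitK (inl _ i)). Qed.

Lemma vcat_rshift n1 n2 q (y : vec n1 q) (z : vec n2 q) i : vcat y z (rshift n1 i) = z i.
Proof. by rewrite ffunE (unsplitK (inr _ i)). Qed.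

Lemma vsum_cat n1 n2 q (y : vec n1 q) (z : vec n2 q) :
  vsum (vcat y z) = vsum y + vsum z.
Proof.
by rewrite /vsum big_split_ord; congr (_ + _); apply: eq_bigr => i _;
  rewrite ?vcat_lshift ?vcat_rshift.
Qed.

Lemma leq_card_vsum_le_set_cat n1 n2 q S1 S2 :
  #|vsum_le_set n1 q S1| * #|vsum_le_set n2 q S2|
    <= #|vsum_le_set (n1 + n2) q (S1 + S2)|.
Proof.
rewrite -cardsX; apply: (@leq_card_imset _ _ (fun p => vcat p.1 p.2)).
  move=> [y z] [y' z'] /= /ffunP eq_cat; congr pair; apply/ffunP => i.
    by have := eq_cat (lshift n2 i); rewrite !vcat_lshift.
  by have := eq_cat (rshift n1 i); rewrite !vcat_rshift.
move=> _ /imsetP [[y z] + ->]; rewrite !inE vsum_cat => /andP [le_y le_z].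
exact: leq_add.
Qed.

Lemma leq_card_vsum_le_set_exp m q S k r : 0 < q ->
  #|vsum_le_set m q S| ^ k <= #|vsum_le_set (k * m + r) q (k * S)|.
Proof.
move=> q_gt0; elim: k => [|k IHk]; first exact: card_vsum_le_set_gt0.
rewrite expnS !mulSn -addnA.
exact: leq_trans (leq_mul (leqnn _) IHk) (leq_card_vsum_le_set_cat _ _ _ _ _).
Qed.

Lemma leq_card_A_set_exp m q0 q k r : 0 < q0 -> q0 <= q ->
  #|A_set m q0| ^ k <= #|A_set (k * m + r) q|.
Proof.
move=> q0_gt0 le_q0q; rewrite !A_setE.
apply: leq_trans (@leq_card_vsum_le_set_exp m q0 _ k r q0_gt0) _.
apply: leq_trans (leq_card_vsum_le_set_widen _ _ le_q0q).
apply/subset_leq_card/subset_vsum_le_set; rewrite leq_divRL // -mulnA.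
apply: leq_trans (leq_mul (leqnn k) (leq_trunc_div _ _)) _.
by rewrite mulnCA leq_mul2l leq_addr orbT.
Qed.

Definition vcons n q (p : 'I_q * vec n q) : vec n.+1 q :=
  [ffun i => if unlift ord0 i is Some j then p.2 j else p.1].

Definition vuncons n q (x : vec n.+1 q) : 'I_q * vec n q :=
  (x ord0, [ffun j => x (lift ord0 j)]).

Lemma vconsK n q : cancel (@vcons n q) (@vuncons n q).
Proof.
move=> [k y]; rewrite /vuncons ffunE unlift_none; congr pair.
by apply/ffunP => j; rewrite !ffunE liftK.
Qed.

Lemma vunconsK n q : cancel (@vuncons n q) (@vcons n q).
Proof.
by move=> x; apply/ffunP => i; rewrite ffunE; case: unliftP => [j|] ->; rewrite ?ffunE.
Qed.

Lemma vsum_cons n q (p : 'I_q * vec n q) : vsum (vcons p) = p.1 + vsum p.2.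
Proof.
rewrite /vsum big_ord_recl ffunE unlift_none; congr (_ + _).
by apply: eq_bigr => j _; rewrite ffunE liftK.
Qed.

Lemma card_vsum_le_set_sum n q S :
  #|vsum_le_set n q S| = \sum_(x : vec n q) (vsum x <= S).
Proof. by rewrite -sum1_card big_mkcond; apply: eq_bigr => x _; rewrite inE. Qed.

Lemma card_vsum_le_set0 q S : #|vsum_le_set 0 q S| = 1.
Proof.
rewrite card_vsum_le_set_sum (eq_bigr (fun=> 1)) => [|x _]; last by rewrite /vsum big_ord0.
by rewrite sum1_card card_ffun !card_ord.
Qed.

Lemma card_vsum_le_setS n q S :
  #|vsum_le_set n.+1 q S| = \sum_(k < q | k <= S) #|vsum_le_set n q (S - k)|.
Proof.
rewrite card_vsum_le_set_sum (reindex (@vcons n q)); last first.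
  by apply: onW_bij; exists (@vuncons n q); [apply: vconsK | apply: vunconsK].
rewrite -(pair_bigA _ (fun k y => (vsum (vcons (k, y)) <= S) : nat)) [RHS]big_mkcond.
apply: eq_bigr => k _; rewrite card_vsum_le_set_sum.
have [le_kS | lt_Sk] := leqP k S.
  by apply: eq_bigr => y _; rewrite vsum_cons leq_subRL.
by rewrite big1 // => y _; rewrite vsum_cons leqNgt ltn_addr.
Qed.

Fixpoint Zsum_lt (f : nat -> Z) (k : nat) : Z :=
  if k is k'.+1 then Z.add (Zsum_lt f k') (f k') else Z0.

Lemma Zsum_lt_of_nat (f : nat -> Z) (g : nat -> nat) j :
  (forall k, f k = Z.of_nat (g k)) -> Zsum_lt f j = Z.of_nat (\sum_(k < j) g k).
Proof.
move=> fg; elim: j => [|j IHj]; first by rewrite big_ord0.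
by rewrite /= IHj big_ord_recr Nat2Z.inj_add fg.
Qed.

Definition card_table_step q (l : seq Z) (s : nat) : Z :=
  Zsum_lt (fun k => if k <= s then nth Z0 l (s - k) else Z0) q.

Fixpoint card_table q S m : seq Z :=
  if m is m'.+1 then map (card_table_step q (card_table q S m')) (iota 0 S.+1)
  else nseq S.+1 Z.one.

Lemma nth_card_table q S m s : s <= S ->
  nth Z0 (card_table q S m) s = Z.of_nat #|vsum_le_set m q s|.
Proof.
elim: m s => [|m IHm] s le_sS; first by rewrite nth_nseq ltnS le_sS card_vsum_le_set0.
rewrite (nth_map 0) ?size_iota ?ltnS // nth_iota ?ltnS // add0n.
rewrite card_vsum_le_setS big_mkcond.
apply: (@Zsum_lt_of_nat _ (fun k => if k <= s then #|vsum_le_set m q (s - k)| else 0)).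
move=> k; case: ifP => // le_ks.
by rewrite IHm // (leq_trans (leq_subr _ _)).
Qed.

Definition card_A_set_Z m q : Z :=
  nth Z0 (card_table q (132 * m %/ 100) m) (132 * m %/ 100).

Lemma card_A_set_ZE m q : card_A_set_Z m q = Z.of_nat #|A_set m q|.
Proof. by rewrite /card_A_set_Z A_setE nth_card_table. Qed.

Lemma nzerosE n q (x : vec n q) : nzeros x = \sum_(i < n) ((x i : nat) == 0).
Proof. by rewrite /nzeros -sum1_card big_mkcond; apply: eq_bigr => i _; rewrite inE. Qed.

Lemma AB_set_nzeros n q x : x \in AB_set n q -> 14 * n <= 25 * nzeros x.
Proof.
rewrite inE => /andP [_ ge_zeros]; rewrite -(leq_pmul2l (isT : 0 < 400)) !mulnA.
exact: leq_trans (leq_mul _ (leqnn n)) ge_zeros.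
Qed.

Lemma A_set_vsum n q x : x \in A_set n q -> 25 * vsum x <= 33 * n.
Proof. rewrite inE; lia. Qed.

Local Open Scope ring_scope.

(* The exponent 25 clears denominators: 14/25 <= 0.5657 and 33/25 = 1.32. *)
Definition weight (t u : R) (k : nat) : R := (u ^+ (25 * (k == 0%N)) * t ^+ (25 * k))%R.

Lemma prod_weight n q t u (x : vec n q) :
  \prod_(i < n) weight t u (x i) = u ^+ (25 * nzeros x) * t ^+ (25 * vsum x).
Proof. by rewrite big_split /= !prodrXr nzerosE /vsum !big_distrr. Qed.

Lemma sum_prod_weight n q t u :
  \sum_(x : vec n q) \prod_(i < n) weight t u (x i) = (\sum_(k < q) weight t u k) ^+ n.
Proof.
by rewrite -(bigA_distr_bigA (fun (i : 'I_n) (k : 'I_q) => weight t u k)) prodr_const card_ord.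
Qed.

Lemma card_AB_set_weight n q t u : 0 <= t <= 1 -> 1 <= u ->
  #|AB_set n q|%:R * (t ^+ 33 * u ^+ 14) ^+ n <= (\sum_(k < q) weight t u k) ^+ n.
Proof.
move=> /andP [t_ge0 t_le1] u_ge1; have u_ge0 : 0 <= u := le_trans ler01 u_ge1.
have weight_ge0 k : 0 <= weight t u k by rewrite mulr_ge0 ?exprn_ge0.
rewrite -sum_prod_weight mulr_natl -sumr_const.
apply: le_trans (_ : \sum_(x in AB_set n q) \prod_(i < n) weight t u (x i) <= _).
  apply: ler_sum => x xAB; rewrite prod_weight exprMn -!exprM mulrC.
  apply: ler_pM; rewrite ?exprn_ge0 //.
    by apply: ler_weXn2l => //; apply: AB_set_nzeros.
  apply: ler_wiXn2l => //; apply: A_set_vsum.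
  by move: xAB; rewrite inE => /andP [].
rewrite [leRHS](bigID (mem (AB_set n q))) /= lerDl.
by apply: sumr_ge0 => x _; apply: prodr_ge0.
Qed.

Lemma card_AB_set_le_pow n q t u rho : 0 < t <= 1 -> 1 <= u ->
  \sum_(k < q) weight t u k <= rho * (t ^+ 33 * u ^+ 14) -> #|AB_set n q|%:R <= rho ^+ n.
Proof.
move=> /andP [t_gt0 t_le1] u_ge1 le_weight; have u_gt0 := lt_le_trans ltr01 u_ge1.
have D_gt0 : 0 < t ^+ 33 * u ^+ 14 by rewrite mulr_gt0 ?exprn_gt0.
have sum_ge0 : 0 <= \sum_(k < q) weight t u k.
  by apply: sumr_ge0 => k _; rewrite mulr_ge0 ?exprn_ge0 ?ltW.
rewrite -(ler_pM2r (exprn_gt0 n D_gt0)) -exprMn.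
apply: le_trans (card_AB_set_weight n q _ u_ge1) _; first by rewrite ltW.
by apply: lerXn2r; rewrite ?nnegrE ?(le_trans sum_ge0).
Qed.

Lemma sum_weight q t u : (0 < q)%N ->
  \sum_(k < q) weight t u k = u ^+ 25 - 1 + \sum_(k < q) (t ^+ 25) ^+ k.
Proof.
case: q => // q _; rewrite !big_ord_recl addrA /weight !muln0 !muln1 !expr0 mulr1 subrK.
by congr (_ + _); apply: eq_bigr => k _; rewrite mul1r exprM.
Qed.

Lemma sum_weight_le q t u rho : 0 < t < 1 -> (0 < q)%N ->
  (u ^+ 25 - 1) * (1 - t ^+ 25) + (1 - (t ^+ 25) ^+ q)
    <= rho * (t ^+ 33 * u ^+ 14) * (1 - t ^+ 25) ->
  \sum_(k < q) weight t u k <= rho * (t ^+ 33 * u ^+ 14).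
Proof.
move=> /andP [t_gt0 t_lt1] q_gt0 le_cert; have T_lt1 : t ^+ 25 < 1 by rewrite exprn_ilt1 ?ltW.
have geometric : (1 - t ^+ 25) * \sum_(k < q) (t ^+ 25) ^+ k = 1 - (t ^+ 25) ^+ q.
  by rewrite -opprB mulNr -subrX1 opprB.
by rewrite -(ler_pM2r (_ : 0 < 1 - t ^+ 25)) ?subr_gt0 // sum_weight // mulrDl
  [X in _ + X]mulrC geometric.
Qed.

Lemma pow_succ_lt_pow_eventually (b a : R) : 0 < b < a ->
  exists K, forall k, (K <= k)%N -> b ^+ k.+1 < a ^+ k.
Proof.
move=> /andP [b_gt0 lt_ba]; have a_gt0 := lt_trans b_gt0 lt_ba.
have ba_ge0 : 0 <= b / a by rewrite divr_ge0 ?ltW.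
have ba_lt1 : Rlt (Rabs (b / a)) 1.
  rewrite Rabs_pos_eq; last exact/RleP.
  by apply/RltP; rewrite ltr_pdivrMr // mul1r.
have binv_gt0 : Rlt 0 b^-1 by apply/RltP; rewrite invr_gt0.
have [K small] := pow_lt_1_zero _ ba_lt1 _ binv_gt0.
exists K => k /ssrnat.leP /small; rewrite Rabs_pos_eq ?RpowE => [/RltP|]; last first.
  by apply/RleP; apply: exprn_ge0.
rewrite expr_div_n ltr_pdivrMr ?exprn_gt0 // -(ltr_pM2l b_gt0).
by rewrite mulrA mulfV ?gt_eqF // mul1r exprS.
Qed.

Lemma pow_lt_eventually_of_blocks (f : nat -> R) (m : nat) (rho a : R) :
  (0 < m)%N -> 1 <= rho -> rho ^+ m < a -> (forall k r, a ^+ k <= f (k * m + r)%N) ->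
  exists N, forall n, (N <= n)%N -> rho ^+ n < f n.
Proof.
move=> m_gt0 rho_ge1 lt_rhom_a blocks.
have rhom_gt0 : 0 < rho ^+ m by rewrite exprn_gt0 // (lt_le_trans ltr01).
have [K eventually_lt] := pow_succ_lt_pow_eventually (introT andP (conj rhom_gt0 lt_rhom_a)).
exists (K * m)%N => n le_Kmn.
have le_pow : rho ^+ n <= (rho ^+ m) ^+ (n %/ m).+1.
  by rewrite -exprM ler_weXn2l // mulnC ltnW // ltn_ceil.
have := blocks (n %/ m)%N (n %% m)%N; rewrite -divn_eq => le_f.
apply: le_lt_trans le_pow (lt_le_trans (eventually_lt _ _) le_f).
by rewrite leq_divRL.
Qed.

Section RatioDecay.
Local Open Scope R_scope.

Definition AB_ratio_decays (q : nat) : Prop :=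
  exists c : R, 1 < c /\
    exists N : nat, forall n : nat, (N <= n)%nat ->
      INR #|AB_set n q| / INR #|A_set n q| < / (c ^ n).

End RatioDecay.

Lemma AB_ratio_decays_of_bounds q (rho rho' : R) : 0 < rho < rho' ->
  (forall n, #|AB_set n q|%:R <= rho ^+ n) ->
  (exists N, forall n, (N <= n)%N -> rho' ^+ n < #|A_set n q|%:R) ->
  AB_ratio_decays q.
Proof.
move=> /andP [rho_gt0 lt_rho] le_AB [N gt_A]; have rho'_gt0 := lt_trans rho_gt0 lt_rho.
exists (rho' / rho); split; first by apply/RltP; rewrite ltr_pdivlMr // mul1r.
exists N => n le_Nn; apply/RltP; rewrite !INRE RdivE RinvE RpowE expr_div_n invf_div.
have A_gt0 : 0 < #|A_set n q|%:R :> R.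
  by apply: lt_trans (gt_A n le_Nn); rewrite exprn_gt0.
apply: le_lt_trans (_ : rho ^+ n / #|A_set n q|%:R < _).
  by rewrite ler_pM2r ?invr_gt0.
by rewrite ltr_pM2l ?exprn_gt0 // ltf_pV2 ?posrE ?exprn_gt0 ?gt_A.
Qed.

Section Certificates.
Local Open Scope Q_scope.

Fixpoint Qpow_nat (x : Q) (n : nat) : Q := if n is n'.+1 then x * Qpow_nat x n' else 1.

Definition Qltb (x y : Q) : bool := ~~ Qle_bool y x.

(* [geo] selects the bound [1 - T^q0 <= 1], which makes the weight inequality
   hold for every alphabet size at least [q0]. *)
Definition weight_certificate (geo : bool) (q0 : nat) (t u rho : Q) : bool :=
  let T := Qpow_nat t 25 in
  [&& (0 < q0)%N, Qltb 0 t, Qltb t 1, Qle_bool 1 u &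
      Qle_bool ((Qpow_nat u 25 - 1) * (1 - T) + (if geo then 1 else 1 - Qpow_nat T q0))
               (rho * (Qpow_nat t 33 * Qpow_nat u 14) * (1 - T))].

Definition growth_certificate (q0 m : nat) (rho' : Q) : bool :=
  [&& (0 < m)%N, Qle_bool 1 rho' & Qltb (Qpow_nat rho' m) (inject_Z (card_A_set_Z m q0))].

Definition certificate (geo : bool) (q0 m : nat) (t u rho rho' : Q) : bool :=
  [&& weight_certificate geo q0 t u rho, growth_certificate q0 m rho',
      Qltb 0 rho & Qltb rho rho'].

End Certificates.

Lemma Q2R_Qpow_nat x n : Q2R (Qpow_nat x n) = Q2R x ^+ n.
Proof. by elim: n => [|n IHn]; rewrite ?RMicromega.Q2R_1 //= Q2R_mult IHn exprS. Qed.

Lemma Qle_boolR x y : Qle_bool x y -> Q2R x <= Q2R y.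
Proof. by move/Qle_bool_iff/Qle_Rle/RleP. Qed.

Lemma QltbR x y : Qltb x y -> Q2R x < Q2R y.
Proof. by move/negP => nle_yx; apply/RltP/Qlt_Rlt/Qnot_le_lt => /Qle_bool_iff. Qed.

Lemma weight_certificate_sound geo q0 q t u rho :
  weight_certificate geo q0 t u rho -> (q0 <= q)%N -> geo || (q0 == q) ->
  forall n, #|AB_set n q|%:R <= Q2R rho ^+ n.
Proof.
case/and5P => q0_gt0 /QltbR t_gt0 /QltbR t_lt1 /Qle_boolR u_ge1 /Qle_boolR le_cert.
move=> le_q0q geo_or_q0q n.
rewrite RMicromega.Q2R_0 in t_gt0; rewrite RMicromega.Q2R_1 in t_lt1 u_ge1.
apply: (card_AB_set_le_pow _ (introT andP (conj t_gt0 (ltW t_lt1))) u_ge1).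
apply: (sum_weight_le (introT andP (conj t_gt0 t_lt1)) (leq_trans q0_gt0 le_q0q)).
move: le_cert; rewrite !(Q2R_plus, Q2R_mult, Q2R_minus, Q2R_Qpow_nat) RMicromega.Q2R_1.
apply: le_trans; rewrite lerD2l.
case: geo geo_or_q0q => [_|/eqP <-]; rewrite ?Q2R_minus ?Q2R_Qpow_nat RMicromega.Q2R_1 //.
by rewrite gerBl !exprn_ge0 // ltW.
Qed.

Lemma Q2R_inject_nat n : Q2R (inject_Z (Z.of_nat n)) = n%:R.
Proof. by rewrite /Q2R /= Rinv_1 Rmult_1_r -INR_IZR_INZ INRE. Qed.

Lemma growth_certificate_sound q0 q m rho' :
  growth_certificate q0 m rho' -> (0 < q0)%N -> (q0 <= q)%N ->
  exists N, forall n, (N <= n)%N -> Q2R rho' ^+ n < #|A_set n q|%:R.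
Proof.
case/and3P => m_gt0 /Qle_boolR rho'_ge1 /QltbR lt_card q0_gt0 le_q0q.
apply: (pow_lt_eventually_of_blocks (a := #|A_set m q0|%:R) m_gt0).
- by move: rho'_ge1; rewrite RMicromega.Q2R_1.
- by rewrite -Q2R_Qpow_nat -Q2R_inject_nat -card_A_set_ZE.
- by move=> k r; rewrite -natrX ler_nat leq_card_A_set_exp.
Qed.

Lemma AB_ratio_decays_of_certificate geo q0 m t u rho rho' q :
  certificate geo q0 m t u rho rho' -> (q0 <= q)%N -> geo || (q0 == q) ->
  AB_ratio_decays q.
Proof.
case/and4P => weight_cert growth_cert /QltbR rho_gt0 /QltbR lt_rho le_q0q geo_or_q0q.
have q0_gt0 : (0 < q0)%N by case/and5P: weight_cert.
apply: (AB_ratio_decays_of_bounds (rho := Q2R rho) (rho' := Q2R rho')).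
- by move: rho_gt0; rewrite RMicromega.Q2R_0 lt_rho andbT.
- exact: weight_certificate_sound weight_cert le_q0q geo_or_q0q.
- exact: growth_certificate_sound growth_cert q0_gt0 le_q0q.
Qed.

Local Open Scope R_scope.

Theorem mainTheorem4 :
  forall q : nat, (2 <= q)%nat ->
  exists c : R, 1 < c /\
    exists N : nat, forall n : nat, (N <= n)%nat ->
      INR #|AB_set n q| / INR #|A_set n q| < / (c ^ n).
Proof.
(* Found numerically: (t, u) near the optimum of the weight bound, rho and rho'
   just above and below the two exponential rates. *)
case=> [|[|[|[|[|[|[|[|q]]]]]]]] // _.
- by apply: (@AB_ratio_decays_of_certificate false 2 1
    (Qmake 99999 100000) (Qmake 104 103) (Qmake 1987 1000) (Qmake 199 100)); first vm_compute.
- by apply: (@AB_ratio_decays_of_certificate false 3 10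
    (Qmake 199 200) (Qmake 34 33) (Qmake 2929 1000) (Qmake 2971 1000)); first vm_compute.
- by apply: (@AB_ratio_decays_of_certificate false 4 10
    (Qmake 199 200) (Qmake 23 22) (Qmake 3411 1000) (Qmake 3587 1000)); first vm_compute.
- by apply: (@AB_ratio_decays_of_certificate false 5 20
    (Qmake 199 200) (Qmake 19 18) (Qmake 1887 500) (Qmake 508 125)); first vm_compute.
- by apply: (@AB_ratio_decays_of_certificate false 6 25
    (Qmake 199 200) (Qmake 17 16) (Qmake 203 50) (Qmake 2157 500)); first vm_compute.
- by apply: (@AB_ratio_decays_of_certificate false 7 50
    (Qmake 136 137) (Qmake 18 17) (Qmake 2143 500) (Qmake 909 200)); first vm_compute.
- by apply: (@AB_ratio_decays_of_certificate true 8 100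
    (Qmake 61 62) (Qmake 27 26) (Qmake 4601 1000) (Qmake 586 125)); first vm_compute.
Qed.
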